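(* Fix a test example $z'$ and $\lambda>0$. Assume $F_S\,\nabla_\theta f(z',\theta_S^* )\neq0$ and $\mathrm{Var}_{A\sim D_a}[f(z',\theta_A^* )]>0$. Then $\dot c_p(\lambda;z')>0$ if and only if $$r_{z',\lambda}\, t_{3,z',\lambda}>\Big(-\nabla_\theta f(z',\theta_S^* )^\top(F_S+\lambda I_p)^{-2}g_{z'}\Big)\, t_{2,z',\lambda}.$$
   Context: Let $n\ge 2$ and let $S=\{z_1,\dots,z_n\}$ be a training set. For parameters $\theta\in\mathbb{R}^p$, let $L(z,\theta)>0$ be a loss that is differentiable in $\theta$. Set $p(z,\theta):=e^{-L(z,\theta)}\in(0,1)$ and $f(z,\theta):=\ln\frac{p(z,\theta)}{1-p(z,\theta)}$. Let $\theta_S^*$ satisfy $\sum_{i=1}^n\nabla_\theta L(z_i,\theta_S^* )=0$. For every subset $A\subseteq S$, let $\theta_A^*\in\mathbb{R}^p$ be a fixed parameter vector. Fix $1\le a<n$, and let $D_a$ be the uniform distribution over the size-$a$ subsets of $S$. Let $J\in\mathbb{R}^{n\times p}$ have $i$-th row $\nabla_\theta L(z_i,\theta_S^* )^\top$, and let $F_S:=\frac1nJ^\top J$. For $\lambda>0$ define $\tau_\lambda(z',z):=-\nabla_\theta f(z',\theta_S^* )^\top(F_S+\lambda I_p)^{-1}\nabla_\theta L(z,\theta_S^* )$. Let $c_p(\lambda;z')$ be the Pearson correlation, under $A\sim D_a$, between $f(z',\theta_A^* )$ and $\sum_{z\in A}\tau_\lambda(z',z)$, and let $\dot c_p(\lambda;z'):=\partial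 c_p(\lambda;z')/\partial\lambda$. Define: - $\alpha_{z',i}:=\mathbb{E}_{A\sim D_a}[f(z',\theta_A^* )\mid z_i\in A]-\mathbb{E}_{A\sim D_a}[f(z',\theta_A^* )]$; - $g_{z'}:=\frac1n\sum_i\alpha_{z',i}\nabla_\theta L(z_i,\theta_S^* )$; - $t_{k,z',\lambda}:=\nabla_\theta f(z',\theta_S^* )^\top(F_S+\lambda I_p)^{-k}F_S\nabla_\theta f(z',\theta_S^* )$; - $r_{z',\lambda}:=-\nabla_\theta f(z',\theta_S^* )^\top(F_S+\lambda I_p)^{-1}g_{z'}$. *)

From HB Require Import structures.
From mathcomp Require Import all_boot all_order all_algebra.
From mathcomp Require Import all_classical all_reals all_analysis.
Set Implicit Arguments. Unset Strict Implicit. Unset Printing Implicit Defensive.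
Import Order.TTheory GRing.Theory Num.Theory.
Import numFieldNormedType.Exports.
Local Open Scope ring_scope.

(* Parameters theta live in R^p, represented as row vectors 'rV[R]_p.
   Gradients are column vectors 'cV[R]_p: the k-th entry is the
   directional derivative along the k-th canonical basis vector. *)
Definition grad (R : realType) (p : nat) (h : 'rV[R]_p -> R) (th : 'rV[R]_p)
  : 'cV[R]_p := \col_k ('D_(delta_mx ord0 k) h th).

Definition plik (R : realType) (p : nat) (Z : Type) (L : Z -> 'rV[R]_p -> R)
  (z : Z) (th : 'rV[R]_p) : R := expR (- L z th).
Definition flogit (R : realType) (p : nat) (Z : Type) (L : Z -> 'rV[R]_p -> R)
  (z : Z) (th : 'rV[R]_p) : R :=
  ln (plik L z th / (1 - plik L z th)).

(* Uniform distribution D_a over the size-a subsets of the index set 'I_n. *)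
Definition subsets_a (n a : nat) : {set {set 'I_n}} := [set A : {set 'I_n} | #|A| == a].

Definition Ea (R : realType) (n a : nat) (X : {set 'I_n} -> R) : R :=
  (\sum_(A in subsets_a n a) X A) / #|subsets_a n a|%:R.

Definition Ea_cond (R : realType) (n a : nat) (i : 'I_n) (X : {set 'I_n} -> R) : R :=
  (\sum_(A in subsets_a n a | i \in A) X A)
    / #|[set A in subsets_a n a | i \in A]|%:R.

Definition Cova (R : realType) (n a : nat) (X Y : {set 'I_n} -> R) : R :=
  Ea a (fun A => (X A - Ea a X) * (Y A - Ea a Y)).
Definition Vara (R : realType) (n a : nat) (X : {set 'I_n} -> R) : R :=
  Cova a X X.
Definition pearson (R : realType) (n a : nat) (X Y : {set 'I_n} -> R) : R :=
  Cova a X Y / Num.sqrt (Vara a X * Vara a Y).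

Section Influence.
Variables (R : realType) (p n : nat) (Z : Type) (L : Z -> 'rV[R]_p -> R)
  (z : 'I_n -> Z) (thetaS : 'rV[R]_p).

Definition Jmat : 'M[R]_(n, p) := \matrix_(i < n) (grad (L (z i)) thetaS)^T.
Definition FS : 'M[R]_p := n%:R^-1 *: ((Jmat)^T *m Jmat).
Definition Mlam (lam : R) : 'M[R]_p := FS + lam%:M.

Definition gradf (z' : Z) : 'cV[R]_p := grad (flogit L z') thetaS.

Definition tau (lam : R) (z' : Z) (zz : Z) : R :=
  - ((gradf z')^T *m invmx (Mlam lam) *m grad (L zz) thetaS) ord0 ord0.

Definition cp (a : nat) (thetaA : {set 'I_n} -> 'rV[R]_p) (z' : Z) (lam : R) : R :=
  pearson a (fun A => flogit L z' (thetaA A))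
            (fun A => \sum_(i in A) tau lam z' (z i)).

Definition alpha (a : nat) (thetaA : {set 'I_n} -> 'rV[R]_p) (z' : Z) (i : 'I_n) : R :=
  Ea_cond a i (fun A => flogit L z' (thetaA A)) - Ea a (fun A => flogit L z' (thetaA A)).

Definition gvec (a : nat) (thetaA : {set 'I_n} -> 'rV[R]_p) (z' : Z) : 'cV[R]_p :=
  n%:R^-1 *: \sum_(i < n) (alpha a thetaA z' i *: grad (L (z i)) thetaS).

Definition tk (k : nat) (z' : Z) (lam : R) : R :=
  ((gradf z')^T *m (invmx (Mlam lam)) ^+ k *m FS *m gradf z') ord0 ord0.

Definition rr (a : nat) (thetaA : {set 'I_n} -> 'rV[R]_p) (z' : Z) (lam : R) : R :=
  - ((gradf z')^T *m invmx (Mlam lam) *m gvec a thetaA z') ord0 ord0.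
End Influence.

(* With u_i := tau_lambda(z', z_i), which sum to zero because the training
   gradients do, the influence sum Y(A) := sum_(i in A) u_i has mean zero under
   D_a.  Counting the size-a subsets that contain one, resp. two, given indices
   gives Cov(f, Y) = c1/N sum_i u_i alpha_i = c1 n r / N and
   Var Y = c2/N sum_i u_i^2 = c2 n t_2 / N, where N = C(n, a),
   c1 = C(n-1, a-1) and c2 = C(n-2, a-1); hence c_p = K0 r / sqrt (K1 t_2) with
   K0, K1 > 0.  By the resolvent identity d/dlambda (F_S + lambda I)^-1 =
   - (F_S + lambda I)^-2, so r' = -s with s := -grad f^T (F_S + lambda I)^-2 g,
   and t_2' = -2 t_3.  Therefore c_p' = K0 K1 (r t_3 - s t_2) / (K1 t_2)^(3/2). *)

From HB Require Import structures.
From mathcomp Require Import all_boot all_order all_algebra.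
From mathcomp Require Import all_classical all_reals all_analysis.
From mathcomp Require Import ring zify.
Set Implicit Arguments. Unset Strict Implicit. Unset Printing Implicit Defensive.
Import Order.TTheory GRing.Theory Num.Theory.
Import numFieldNormedType.Exports.
Local Open Scope ring_scope.

Lemma scaleRE (R : realType) (c x : R) : c *: x = c * x.
Proof. by []. Qed.

Lemma dotmx_self_gt0 (R : realDomainType) p (v : 'rV[R]_p) :
  v != 0 -> 0 < (v *m v^T) 0 0.
Proof.
move=> v0; rewrite mxE lt_def psumr_eq0 => [|k _]; last by rewrite mxE -expr2 sqr_ge0.
rewrite sumr_ge0 ?andbT => [|k _]; last by rewrite mxE -expr2 sqr_ge0.
apply: contra v0 => /allP v_eq0; apply/eqP/matrixP => i k.
have := v_eq0 k (mem_index_enum _).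
by rewrite (ord1 i) !mxE -expr2 sqrf_eq0 => /eqP.
Qed.

Section Resolvent.
Local Open Scope classical_set_scope.
Variables (R : realType) (p : nat) (F : 'M[R]_p).
Hypothesis F_psd : forall x : 'cV[R]_p, 0 <= (x^T *m F *m x) 0 0.

Lemma shift_unitmx mu : 0 < mu -> F + mu%:M \in unitmx.
Proof.
move=> mu0; rewrite unitmxE unitfE; apply/negP => /det0P [v v0 vM].
have : (v *m (F + mu%:M) *m v^T) 0 0 = 0 by rewrite vM mul0mx mxE.
rewrite mulmxDr mul_mx_scalar mulmxDl -scalemxAl mxE [X in _ + X]mxE.
apply/eqP; rewrite gt_eqF // ltr_pwDr ?mulr_gt0 ?dotmx_self_gt0 //.
by have := F_psd v^T; rewrite trmxK.
Qed.

Lemma resolvent_identity mu la : 0 < mu -> 0 < la ->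
  invmx (F + mu%:M) - invmx (F + la%:M) =
  (la - mu) *: (invmx (F + mu%:M) *m invmx (F + la%:M)).
Proof.
move=> mu0 la0.
have eA := mulVmx (shift_unitmx mu0); have eB := mulmxV (shift_unitmx la0).
transitivity (invmx (F + mu%:M) *m ((F + la%:M) - (F + mu%:M)) *m invmx (F + la%:M)).
  by rewrite mulmxBr mulmxBl -!mulmxA eB mulmx1 !mulmxA eA mul1mx.
by rewrite opprD addrACA subrr add0r -raddfB mul_mx_scalar -scalemxAl.
Qed.

Definition bform (x w : 'cV[R]_p) (B : 'M[R]_p) : R := (x^T *m B *m w) 0 0.

Lemma bformZ x w c B : bform x w (c *: B) = c * bform x w B.
Proof. by rewrite /bform -scalemxAr -scalemxAl mxE. Qed.

Lemma bformB x w A B : bform x w (A - B) = bform x w A - bform x w B.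
Proof.
rewrite /bform mulmxBr mulmxBl.
by set a := x^T *m A *m w; set b := x^T *m B *m w; rewrite !mxE.
Qed.

Lemma bform_tr x w B : bform x w B^T = bform w x B.
Proof.
rewrite /bform [LHS](_ : _ = (x^T *m B^T *m w)^T 0 0); last by rewrite [RHS]mxE.
by rewrite !trmx_mul !trmxK mulmxA.
Qed.

Definition resolvent_form (x w : 'cV[R]_p) (mu : R) : R :=
  bform x w (invmx (F + mu%:M)).

(* The entries of the resolvent are rational in mu (adjugate over determinant),
   which gives differentiability. *)
Let shift_polymx : 'M[{poly R}]_p := map_mx polyC F + 'X%:M.

Let shift_polymx_eval mu : map_mx (horner_eval mu) shift_polymx = F + mu%:M.
Proof.
by apply/matrixP => i j; rewrite !mxE /horner_eval hornerD hornerC hornerMn hornerX.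
Qed.

Let bform_poly (x w : 'cV[R]_p) (Q : 'M[{poly R}]_p) : {poly R} :=
  \sum_j \sum_i (x i 0 * w j 0) *: Q i j.

Let bform_eval x w Q mu :
  bform x w (map_mx (horner_eval mu) Q) = (bform_poly x w Q).[mu].
Proof.
rewrite /bform /bform_poly mxE horner_sum; apply: eq_bigr => j _.
rewrite mxE horner_sum mulr_suml; apply: eq_bigr => i _.
by rewrite !mxE hornerZ /horner_eval mulrAC mulrC !mulrA.
Qed.

Lemma resolvent_form_derivable (x w : 'cV[R]_p) (la : R) : 0 < la ->
  derivable (resolvent_form x w) la 1.
Proof.
move=> la0.
have det_neq0 mu : 0 < mu -> (\det shift_polymx).[mu] != 0.
  by move/shift_unitmx; rewrite unitmxE unitfE -shift_polymx_eval det_map_mx.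
pose g := (fun y => ((\det shift_polymx).[y])^-1)
          * horner (bform_poly x w (\adj shift_polymx)).
have : derivable g la 1.
  apply: ex_derive; apply: is_deriveM (is_derive_poly _ la).
  exact: is_deriveV (det_neq0 _ la0) (is_derive_poly _ la).
apply: near_eq_derivable; near=> mu.
have mu0 : 0 < mu by near: mu; exact: lt_nbhsr.
rewrite /g /resolvent_form /= /invmx (shift_unitmx mu0) -shift_polymx_eval.
by rewrite -map_mx_adj det_map_mx bformZ bform_eval.
Unshelve. all: by end_near.
Qed.

Lemma is_derive_resolvent_form (x w : 'cV[R]_p) (la : R) : 0 < la ->
  is_derive la 1 (resolvent_form x w) (- bform x w (invmx (F + la%:M) ^+ 2)).
Proof.
move=> la0; apply/is_derive1_caratheodory.
pose psi := resolvent_form x (invmx (F + la%:M) *m w).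
have psiE mu : psi mu = bform x w (invmx (F + mu%:M) *m invmx (F + la%:M)).
  by rewrite /psi /resolvent_form /bform !mulmxA.
(* By the resolvent identity, [- psi] is the difference quotient at [la]. *)
exists (fun mu => if 0 < mu then - psi mu else
          if mu == la then 0 else
          (resolvent_form x w mu - resolvent_form x w la) / (mu - la)); split.
- move=> mu; case: ifP => mu0.
    rewrite /resolvent_form -bformB resolvent_identity // bformZ psiE.
    by rewrite mulNr -mulrN opprB mulrC.
  case: ifP => [/eqP mula|mula]; first by move: mu0; rewrite mula la0.
  by rewrite divfK // subr_eq0 mula.
- have cpsi : (fun mu => - psi mu) @ la --> - psi la.
    apply: cvgN; apply: differentiable_continuous; apply/derivable1_diffP.
    exact: resolvent_form_derivable.
  rewrite /prop_for /continuous_at la0; apply: cvg_trans cpsi.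
  apply: near_eq_cvg; near=> mu.
  have mu0 : 0 < mu by near: mu; exact: lt_nbhsr.
  by rewrite mu0.
- by rewrite la0 psiE expr2 mulmxE.
Unshelve. all: by end_near.
Qed.

End Resolvent.

Lemma bin_pascal m k : (0 < m)%N -> (0 < k)%N ->
  'C(m, k) = ('C(m.-1, k.-1) + 'C(m.-1, k))%N.
Proof. by case: m k => [|m] [|k] // _ _; rewrite binS addnC. Qed.

Lemma subsetC1 (T : finType) (A : {set T}) (i : T) :
  (A \subset ~: [set i]) = (i \notin A).
Proof. by rewrite finset.subsetC finset.sub1set finset.in_setC. Qed.

Section SubsetMoments.
Variables (R : realType) (n a : nat).
Hypotheses (n_gt1 : (1 < n)%N) (a_gt0 : (0 < a)%N) (a_lt_n : (a < n)%N).
Let S := subsets_a n a.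
Let c1 : R := 'C(n.-1, a.-1)%:R.
Let c2 : R := 'C(n.-2, a.-1)%:R.

Lemma card_subsets_a : #|S| = 'C(n, a).
Proof. by rewrite /S /subsets_a card_draws card_ord. Qed.

Lemma sum_subsets_indicator (P : pred {set 'I_n}) :
  \sum_(A in S) (P A)%:R = #|[set A in S | P A]|%:R :> R.
Proof.
rewrite -sumr_const big_mkcond [RHS]big_mkcond /=.
by apply: eq_bigr => A _; rewrite [in RHS]inE; case: (A \in S); case: (P A).
Qed.

Lemma sum_subsets_avoid (B : {set 'I_n}) :
  \sum_(A in S) (A \subset ~: B)%:R = 'C(n - #|B|, a)%:R :> R.
Proof.
have -> : (n - #|B|)%N = #|~: B|.
  by rewrite -[in RHS](addKn #|B| #|~: B|) cardsC card_ord.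
rewrite sum_subsets_indicator -cards_draws; congr (_%:R).
by apply: eq_card => A; rewrite !inE andbC.
Qed.

Lemma sum_subsets_mem (i : 'I_n) : \sum_(A in S) (i \in A)%:R = c1.
Proof.
have -> : \sum_(A in S) (i \in A)%:R =
          \sum_(A in S) (1 - (A \subset ~: [set i])%:R) :> R.
  by apply: eq_bigr => A _; rewrite subsetC1; case: (i \in A); rewrite ?subrr ?subr0.
rewrite sumrB sumr_const sum_subsets_avoid cards1 subn1 card_subsets_a.
by rewrite /c1 (bin_pascal (ltnW n_gt1) a_gt0) natrD addrK.
Qed.

(* Inclusion-exclusion over the events i \notin A and j \notin A. *)
Lemma sum_subsets_mem2 (i j : 'I_n) :
  \sum_(A in S) (i \in A)%:R * (j \in A)%:R = c1 - c2 + (i == j)%:R * c2.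
Proof.
have -> : \sum_(A in S) ((i \in A)%:R * (j \in A)%:R : R) =
  \sum_(A in S) (1 - (A \subset ~: [set i])%:R - (A \subset ~: [set j])%:R
                 + (A \subset ~: [set i; j])%:R).
  apply: eq_bigr => A _; rewrite finset.setCU finset.subsetI !subsetC1.
  by case: (i \in A); case: (j \in A); rewrite /=; ring.
rewrite big_split !sumrB /= sumr_const !sum_subsets_avoid !cards1 cards2 subn1.
have pascal1 : ('C(n, a)%:R - 'C(n.-1, a)%:R : R) = c1.
  by rewrite /c1 (bin_pascal (ltnW n_gt1) a_gt0) natrD addrK.
have pascal2 : ('C(n.-1, a)%:R - 'C(n.-2, a)%:R : R) = c2.
  by rewrite /c2 (@bin_pascal n.-1 a) ?natrD ?addrK // -subn1 subn_gt0.
rewrite card_subsets_a; case: (i == j) => /=.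
  by rewrite subn1 mul1r subrK -pascal1; ring.
by rewrite subn2 mul0r addr0 -pascal1 -pascal2; ring.
Qed.

Section Moments.
Variables (X : {set 'I_n} -> R) (u : 'I_n -> R).
Hypothesis u_sum0 : \sum_i u i = 0.
Let Y (A : {set 'I_n}) := \sum_(i in A) u i.

Let sum_subsets_mulY (g : {set 'I_n} -> R) :
  \sum_(A in S) g A * Y A = \sum_i u i * \sum_(A in S) (i \in A)%:R * g A.
Proof.
have YE A : Y A = \sum_i (i \in A)%:R * u i.
  by rewrite /Y big_mkcond; apply: eq_bigr => i _; case: (i \in A); rewrite ?mul1r ?mul0r.
under eq_bigr => A _ do rewrite YE mulr_sumr.
rewrite exchange_big /=; apply: eq_bigr => i _; rewrite mulr_sumr.
by apply: eq_bigr => A _; rewrite mulrCA mulrA mulrC.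
Qed.

Lemma mean_subset_sum : Ea a Y = 0.
Proof.
rewrite /Ea (eq_bigr (fun A => 1 * Y A)) => [|A _]; last by rewrite mul1r.
rewrite sum_subsets_mulY (eq_bigr (fun i => u i * c1)) => [|i _].
  by rewrite -mulr_suml u_sum0 !mul0r.
by rewrite -(sum_subsets_mem i); congr (_ * _); apply: eq_bigr => A _; rewrite mulr1.
Qed.

Lemma cov_subset_sum :
  Cova a X Y = c1 * (\sum_i u i * (Ea_cond a i X - Ea a X)) / #|S|%:R.
Proof.
rewrite /Cova mean_subset_sum; set E := Ea a X; rewrite /Ea; congr (_ / _).
under eq_bigr => A _ do rewrite subr0.
rewrite sum_subsets_mulY mulr_sumr; apply: eq_bigr => i _; rewrite mulrCA; congr (_ * _).
have c1_neq0 : c1 != 0 by rewrite /c1 pnatr_eq0 -lt0n bin_gt0; lia.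
have cardE : #|[set A in S | i \in A]|%:R = c1.
  by rewrite -sum_subsets_indicator sum_subsets_mem.
rewrite /Ea_cond -/S cardE mulrBr mulrCA divff // mulr1.
under eq_bigr => A _ do rewrite mulrBr.
rewrite sumrB -mulr_suml sum_subsets_mem mulrC big_mkcondr /=.
by congr (_ - _); apply: eq_bigr => A _; case: (i \in A); rewrite ?mul1r ?mul0r.
Qed.

Lemma var_subset_sum : Vara a Y = c2 * (\sum_i u i ^+ 2) / #|S|%:R.
Proof.
rewrite /Vara /Cova mean_subset_sum /Ea; congr (_ / _).
under eq_bigr => A _ do rewrite subr0.
rewrite sum_subsets_mulY mulr_sumr; apply: eq_bigr => i _.
rewrite sum_subsets_mulY (eq_bigr (fun j => u j * (c1 - c2) + (j == i)%:R * (c2 * u j))).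
  rewrite big_split /= -mulr_suml u_sum0 mul0r add0r (bigD1 i) //= eqxx mul1r.
  by rewrite big1 ?addr0 => [|j /negbTE ->]; rewrite ?mul0r // mulrCA expr2.
by move=> j _; rewrite sum_subsets_mem2; ring.
Qed.

End Moments.
End SubsetMoments.

Section FisherInformation.
Variables (R : realType) (p n : nat) (Z : Type) (L : Z -> 'rV[R]_p -> R)
  (z : 'I_n -> Z) (thetaS : 'rV[R]_p).
Hypothesis n_gt0 : (0 < n)%N.
Let G i := grad (L (z i)) thetaS.
Let F := FS L z thetaS.
Let M mu := Mlam L z thetaS mu.

Lemma sum_grad_dot (x y : 'cV[R]_p) :
  \sum_i ((G i)^T *m x) 0 0 * ((G i)^T *m y) 0 0 = n%:R * (x^T *m F *m y) 0 0.
Proof.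
rewrite /F /FS -scalemxAr -scalemxAl mxE mulrA mulfV ?pnatr_eq0 -?lt0n // mul1r.
rewrite mulmxA -trmx_mul -mulmxA mxE; apply: eq_bigr => i _.
by rewrite !mxE; congr (_ * _); apply: eq_bigr => k _; rewrite !mxE.
Qed.

Lemma FS_psd (x : 'cV[R]_p) : 0 <= (x^T *m F *m x) 0 0.
Proof.
rewrite -(@pmulr_rge0 _ n%:R) ?ltr0n // -sum_grad_dot.
by apply: sumr_ge0 => i _; rewrite -expr2 sqr_ge0.
Qed.

Lemma FS_form_eq0 (x : 'cV[R]_p) : (x^T *m F *m x) 0 0 = 0 -> F *m x = 0.
Proof.
move=> /(congr1 (fun t => n%:R * t)); rewrite -sum_grad_dot mulr0.
move=> /eqP; rewrite psumr_eq0 => [/allP Gx0|i _]; last by rewrite -expr2 sqr_ge0.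
suff Jx0 : Jmat L z thetaS *m x = 0.
  by rewrite /F /FS -scalemxAl -mulmxA Jx0 mulmx0 scaler0.
apply/matrixP => i j; rewrite (ord1 j) [RHS]mxE.
have := Gx0 i (mem_index_enum _); rewrite -expr2 sqrf_eq0 => /eqP <-.
by rewrite !mxE; apply: eq_bigr => k _; rewrite !mxE.
Qed.

Lemma Mlam_unitmx mu : 0 < mu -> M mu \in unitmx.
Proof. exact: shift_unitmx FS_psd mu. Qed.

Lemma invmx_Mlam_sym mu : (invmx (M mu))^T = invmx (M mu).
Proof.
by rewrite trmx_inv /M /Mlam linearD /= /FS linearZ /= trmx_mul trmxK tr_scalar_mx.
Qed.

Lemma FS_invmx_Mlam_comm mu : 0 < mu -> GRing.comm F (invmx (M mu)).
Proof.
move=> mu0; have Mu := Mlam_unitmx mu0.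
have FM : F *m M mu = M mu *m F.
  by rewrite /M /Mlam mulmxDr mulmxDl mul_mx_scalar mul_scalar_mx.
rewrite /GRing.comm -!mulmxE -[LHS]mul1mx -(mulVmx Mu) -!mulmxA; congr (_ *m _).
by rewrite mulmxA -FM -mulmxA mulmxV // mulmx1.
Qed.

(* [F] commutes with the resolvent, so the Gram sum of [sum_grad_dot]
   collapses into [tk]. *)
Lemma sum_resolvent_form_tk (z' : Z) k mu : 0 < mu ->
  \sum_i resolvent_form F (G i) (gradf L thetaS z') mu
         * bform (G i) (gradf L thetaS z') (invmx (M mu) ^+ k)
  = n%:R * tk L z thetaS k.+1 z' mu.
Proof.
move=> mu0; set v := gradf L thetaS z'; set Mi := invmx (M mu).
under eq_bigr => i _ do rewrite /resolvent_form /bform -!mulmxA.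
rewrite sum_grad_dot /tk -/v -/Mi; congr (_ * _).
have FMk : F *m Mi ^+ k = Mi ^+ k *m F := commrX k (FS_invmx_Mlam_comm mu0).
rewrite trmx_mul invmx_Mlam_sym -/Mi -/F exprS -mulmxE !mulmxA.
by rewrite -[v^T *m Mi *m F *m Mi ^+ k]mulmxA FMk mulmxA.
Qed.

End FisherInformation.

Lemma is_derive_div_sqrt (R : realType) (f g : R -> R) (x df dg : R) :
  0 < g x -> is_derive x 1 f df -> is_derive x 1 g dg ->
  is_derive x 1 (fun y => f y / Num.sqrt (g y))
    ((2 * g x * df - f x * dg) / (2 * Num.sqrt (g x) ^+ 3)).
Proof.
move=> gx0 fdf gdg.
have sx0 : 0 < Num.sqrt (g x) by rewrite sqrtr_gt0.
have dsqrt := is_derive1_comp (is_derive1_sqrt gx0) gdg.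
have : is_derive x 1 (fun y => f y / Num.sqrt (g y)) _ :=
  is_deriveM fdf (@is_deriveV _ (Num.sqrt \o g) x _ 1 (lt0r_neq0 sx0) dsqrt).
move/is_derive_eq; apply; rewrite /= !scaleRE.
have gxE : g x = Num.sqrt (g x) ^+ 2 by rewrite sqr_sqrtr ?ltW.
rewrite [in 2 * g x * _]gxE.
match goal with |- ?lhs = ?rhs => change (@eq R lhs rhs) end.
by field; rewrite gt_eqF.
Qed.

Section InfluenceCorrelation.
Variables (R : realType) (p n : nat) (Z : Type) (L : Z -> 'rV[R]_p -> R)
  (z : 'I_n -> Z) (thetaS : 'rV[R]_p) (thetaA : {set 'I_n} -> 'rV[R]_p)
  (a : nat) (z' : Z).
Hypotheses (n_gt1 : (1 < n)%N) (a_gt0 : (0 < a)%N) (a_lt_n : (a < n)%N).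
Hypothesis grad_sum0 : \sum_i grad (L (z i)) thetaS = 0.

Let n_gt0 : (0 < n)%N := ltnW n_gt1.
Let n_neq0 : (n%:R : R) != 0. Proof. by rewrite pnatr_eq0 -lt0n. Qed.
Let G i := grad (L (z i)) thetaS.
Let F := FS L z thetaS.
Let v := gradf L thetaS z'.
Let X A := flogit L z' (thetaA A).
Let tau_z mu i := tau L z thetaS mu z' (z i).
Let r := rr L z thetaS a thetaA z'.
Let t k := tk L z thetaS k z'.

Lemma sum_tau mu : \sum_i tau_z mu i = 0.
Proof.
by rewrite /tau_z /tau sumrN -summxE -mulmx_sumr grad_sum0 mulmx0 mxE oppr0.
Qed.

Lemma sum_tau_alpha mu :
  \sum_i tau_z mu i * (Ea_cond a i X - Ea a X) = n%:R * r mu.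
Proof.
rewrite /r /rr /gvec -scalemxAr mxE mulrN mulrA mulfV // mul1r.
rewrite mulmx_sumr summxE -sumrN; apply: eq_bigr => i _.
by rewrite /tau_z /tau -scalemxAr [in RHS]mxE mulNr mulrC.
Qed.

Lemma tau_resolvent mu i : tau_z mu i = - resolvent_form F (G i) v mu.
Proof. by rewrite /resolvent_form -bform_tr invmx_Mlam_sym. Qed.

Lemma sum_tau_sq mu : 0 < mu -> \sum_i tau_z mu i ^+ 2 = n%:R * t 2 mu.
Proof.
move=> mu0; rewrite -sum_resolvent_form_tk //; apply: eq_bigr => i _.
by rewrite tau_resolvent sqrrN expr1 expr2.
Qed.

Lemma tk2_gt0 mu : 0 < mu -> F *m v != 0 -> 0 < t 2 mu.
Proof.
move=> mu0 Fv0; set Mi := invmx (Mlam L z thetaS mu).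
have t2E : t 2 mu = ((Mi *m v)^T *m F *m (Mi *m v)) 0 0.
  apply: (mulfI n_neq0).
  rewrite -sum_resolvent_form_tk // -(sum_grad_dot L z thetaS n_gt0).
  by apply: eq_bigr => i _; rewrite /resolvent_form /bform expr1 -!mulmxA.
rewrite t2E lt_def (FS_psd L z thetaS n_gt0) andbT.
apply: contra Fv0 => /eqP /(FS_form_eq0 n_gt0) FMv0.
have MiF : Mi *m F = F *m Mi := esym (FS_invmx_Mlam_comm L z thetaS n_gt0 mu0).
rewrite -[F *m v]mul1mx -(mulmxV (Mlam_unitmx L z thetaS n_gt0 mu0)) -/Mi -!mulmxA.
by rewrite [Mi *m (F *m v)]mulmxA MiF -mulmxA FMv0 !mulmx0.
Qed.

(* [t 2] as a mean of squared resolvent forms (t2fE), which is easy to differentiate. *)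
Let t2f mu := n%:R^-1 * \sum_i resolvent_form F (G i) v mu ^+ 2.

Lemma t2fE mu : 0 < mu -> t2f mu = t 2 mu.
Proof.
by move=> mu0; rewrite /t2f -[t 2 mu](mulKf n_neq0) -sum_resolvent_form_tk.
Qed.

Let N : R := #|subsets_a n a|%:R.
Let c1 : R := 'C(n.-1, a.-1)%:R.
Let c2 : R := 'C(n.-2, a.-1)%:R.
Let K0 := c1 * n%:R / N.
Let K1 := Vara a X * (c2 * n%:R / N).

Let K0_gt0 : 0 < K0.
Proof. by rewrite divr_gt0 ?mulr_gt0 ?ltr0n ?card_subsets_a ?bin_gt0 //; lia. Qed.

Let K1_gt0 : 0 < Vara a X -> 0 < K1.
Proof.
move=> VX0.
by rewrite mulr_gt0 // divr_gt0 ?mulr_gt0 ?ltr0n ?card_subsets_a ?bin_gt0 //; lia.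
Qed.

Lemma cp_closed_form mu : 0 < mu ->
  cp L z thetaS a thetaA z' mu = K0 * r mu / Num.sqrt (K1 * t2f mu).
Proof.
move=> mu0; rewrite /cp /pearson t2fE //.
rewrite cov_subset_sum ?sum_tau // var_subset_sum ?sum_tau //.
rewrite sum_tau_alpha sum_tau_sq // /K0 /K1 /c1 /c2 /N.
by congr (_ / Num.sqrt _); ring.
Qed.

Let s (lam : R) := - ((v^T *m invmx (Mlam L z thetaS lam) ^+ 2
                  *m gvec L z thetaS a thetaA z') ord0 ord0).

Lemma is_derive_rr (lam : R) : 0 < lam -> is_derive lam 1 r (- s lam).
Proof.
move=> lam0; have -> : r = - resolvent_form F v (gvec L z thetaS a thetaA z') by [].
have := is_deriveN (is_derive_resolvent_form (FS_psd L z thetaS n_gt0) v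
                      (gvec L z thetaS a thetaA z') lam0).
by rewrite opprK.
Qed.

Lemma is_derive_t2f (lam : R) : 0 < lam -> is_derive lam 1 t2f (- 2 * t 3 lam).
Proof.
move=> lam0.
have drf i :=
  is_deriveX 2 (is_derive_resolvent_form (FS_psd L z thetaS n_gt0) (G i) v lam0).
have := is_deriveZ n%:R^-1 (is_derive_sum drf); rewrite fct_sumE => dt2.
apply: is_derive_eq (dt2 : is_derive lam 1 t2f _) _.
rewrite -[t 3 lam](mulKf n_neq0) -(sum_resolvent_form_tk L z thetaS n_gt0 z' 2 lam0).
rewrite scaleRE mulrCA; congr (_ * _); rewrite mulr_sumr; apply: eq_bigr => i _.
by rewrite !scaleRE expr1; ring.
Qed.

Lemma derive1_cp lam : 0 < lam -> F *m v != 0 -> 0 < Vara a X ->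
  derive1 (cp L z thetaS a thetaA z') lam =
  K0 * K1 / Num.sqrt (K1 * t 2 lam) ^+ 3 * (r lam * t 3 lam - s lam * t 2 lam).
Proof.
move=> lam0 Fv0 VX0.
have K1t2_gt0 : 0 < K1 * t2f lam by rewrite t2fE // mulr_gt0 ?K1_gt0 ?tk2_gt0.
have := is_derive_div_sqrt (g := K1 \*: t2f) (x := lam) K1t2_gt0
          (is_deriveZ K0 (is_derive_rr lam0)) (is_deriveZ K1 (is_derive_t2f lam0)).
have cpE : \forall mu \near lam,
    K0 * r mu / Num.sqrt (K1 * t2f mu) = cp L z thetaS a thetaA z' mu.
  by near=> mu; rewrite cp_closed_form //; near: mu; exact: lt_nbhsr.
move=> /(near_eq_is_derive cpE) dcp; rewrite derive1E; case: dcp => _ ->.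
rewrite /= !scaleRE t2fE //; set q := Num.sqrt _.
have q_gt0 : 0 < q by rewrite sqrtr_gt0 -t2fE.
match goal with |- ?lhs = ?rhs => change (@eq R lhs rhs) end.
by field; rewrite gt_eqF.
Unshelve. all: by end_near.
Qed.

Lemma derive1_cp_gt0 lam : 0 < lam -> F *m v != 0 -> 0 < Vara a X ->
  0 < derive1 (cp L z thetaS a thetaA z') lam <-> s lam * t 2 lam < r lam * t 3 lam.
Proof.
move=> lam0 Fv0 VX0; rewrite derive1_cp // pmulr_rgt0 ?subr_gt0 //.
have q_gt0 : 0 < Num.sqrt (K1 * t 2 lam) by rewrite sqrtr_gt0 mulr_gt0 ?K1_gt0 ?tk2_gt0.
by rewrite divr_gt0 ?exprn_gt0 // mulr_gt0 ?K1_gt0.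
Qed.

End InfluenceCorrelation.

Theorem mainTheorem2 (R : realType) (p n : nat) (Z : Type)
  (L : Z -> 'rV[R]_p -> R) (z : 'I_n -> Z) (thetaS : 'rV[R]_p)
  (thetaA : {set 'I_n} -> 'rV[R]_p) (a : nat) (z' : Z) (lam : R) :
  (2 <= n)%N ->
  (1 <= a)%N -> (a < n)%N ->
  (forall zz th, 0 < L zz th) ->
  (forall zz th, differentiable (L zz) th) ->
  \sum_(i < n) grad (L (z i)) thetaS = 0 ->
  0 < lam ->
  FS L z thetaS *m gradf L thetaS z' != 0 ->
  0 < Vara a (fun A => flogit L z' (thetaA A)) ->
  (0 < derive1 (cp L z thetaS a thetaA z') lam <->
   rr L z thetaS a thetaA z' lam * tk L z thetaS 3 z' lam >
   (- ((gradf L thetaS z')^T *m (invmx (Mlam L z thetaS lam)) ^+ 2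
        *m gvec L z thetaS a thetaA z') ord0 ord0)
   * tk L z thetaS 2 z' lam).
Proof.
move=> n_gt1 a_gt0 a_lt_n _ _ grad_sum0 lam0 Fv0 VX0.
exact: derive1_cp_gt0.
Qed.
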